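(* Let $S$ and $R$ be finite sequences of propositional formulae. The sequence $S \cdot R$ is not equivalent to $S$ if and only if there exist models $I$ and $J$ such that $I \leq_S J$, $J \leq_S I$ and $I \not\leq_R J$ all hold.
   Context: Models are truth assignments. For a formula $G$: $I \leq_G J$ iff $I \models G$ or $J \not\models G$. For a sequence $S=[S_1,\ldots,S_m]$: $I \leq_S J$ iff either $S=[]$, or ($I \leq_{S_1} J$ and (either $J \not\leq_{S_1} I$ or $I \leq_{S'} J$)), where $S'=[S_2,\ldots,S_m]$. Two sequences are equivalent if their orders coincide on all pairs of models. $S\cdot R$ denotes concatenation of sequences. *)

From Stdlib Require Import List.
Import ListNotations.

Inductive formula : Type :=
  | FVar : nat -> formula
  | FTrue : formula
  | FFalse : formula
  | FNot : formula -> formula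
  | FAnd : formula -> formula -> formula
  | FOr : formula -> formula -> formula
  | FImp : formula -> formula -> formula.

Definition model := nat -> bool.

Fixpoint sat (I : model) (G : formula) : Prop :=
  match G with
  | FVar n => I n = true
  | FTrue => True
  | FFalse => False
  | FNot a => ~ sat I a
  | FAnd a b => sat I a /\ sat I b
  | FOr a b => sat I a \/ sat I b
  | FImp a b => sat I a -> sat I b
  end.

Definition le_f (G : formula) (I J : model) : Prop := sat I G \/ ~ sat J G.

Fixpoint le_seq (S : list formula) (I J : model) : Prop :=
  match S with
  | [] => True
  | S1 :: S' => le_f S1 I J /\ (~ le_f S1 J I \/ le_seq S' I J)
  end.

Definition seq_equiv (S1 S2 : list formula) : Prop :=
  forall I J : model, le_seq S1 I J <-> le_seq S2 I J.

(* Since [le_seq (S ++ R) I J] holds iff [I <=_S J] and, in case [J <=_S I]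
   as well, [I <=_R J], appending [R] only changes the order on pairs that
   [S] ties, and there it changes it exactly when [R] does not relate them. *)
From Stdlib Require Import List Classical.
Import ListNotations.

Lemma le_seq_app (S R : list formula) (I J : model) :
  le_seq (S ++ R) I J <-> le_seq S I J /\ (~ le_seq S J I \/ le_seq R I J).
Proof.
  induction S as [|F S IH]; simpl; [tauto|].
  rewrite IH.
  destruct (classic (le_f F J I)), (classic (le_f F I J)),
    (classic (le_seq S J I)); tauto.
Qed.

Lemma seq_equiv_app_l (S R : list formula) :
  seq_equiv (S ++ R) S <->
  forall I J : model, le_seq S I J -> le_seq S J I -> le_seq R I J.
Proof.
  split.
  - intros Heq I J HIJ HJI.
    apply (proj2 (Heq I J)), le_seq_app in HIJ; tauto.
  - intros Htie I J; rewrite le_seq_app.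
    specialize (Htie I J); tauto.
Qed.

Theorem lemma2 (S R : list formula) :
  ~ seq_equiv (S ++ R) S <->
  exists I J : model, le_seq S I J /\ le_seq S J I /\ ~ le_seq R I J.
Proof.
  rewrite seq_equiv_app_l.
  split.
  - intros Hnot; apply NNPP; intros Hno; apply Hnot; intros I J HIJ HJI.
    apply NNPP; intros HR; apply Hno; now exists I, J.
  - intros [I [J [HIJ [HJI HR]]]] Htie.
    exact (HR (Htie I J HIJ HJI)).
Qed.
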